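(* In the setting of the context, for $\delta\in(0,1)$, with probability at least $1-\delta$, for all $t\in[H]$ and all $(s,a)$ with $d^\mu_t(s,a)>0$, \[ \big|\tilde\sigma_{V^{\rm in}_{t+1}}(s,a)-\sigma_{V^{\rm in}_{t+1}}(s,a)\big|\le6H^2\sqrt{\frac{\log(4HSA/\delta)}{m\,d^\mu_t(s,a)}}+\frac{4H^2\log(4HSA/\delta)}{m\,d^\mu_t(s,a)}. \]
   Context: $\mathcal D$ consists of $m$ i.i.d. episodes from behavior policy $\mu$ in a finite-horizon tabular MDP with $S$ states, $A$ actions, horizon $H$, transitions $P_t$. For each $t\in[H]$, $V^{\rm in}_{t+1}:\mathcal S\to[0,H]$ is fixed (not depending on $\mathcal D$). $d^\mu_t(s,a)=\mathbb P^\mu(s_t=s,a_t=a)$; $\sigma_V(s,a)=\mathrm{Var}_{s'\sim P_t(\cdot|s,a)}[V(s')]$. $n_{t,s,a}$ is the number of episodes in $\mathcal D$ with $(s_t,a_t)=(s,a)$. If $n_{t,s,a}\ge\frac12md^\mu_t(s,a)$ and $n_{t,s,a}>0$, set $\tilde z_t(s,a)=\frac1{n_{t,s,a}}\sum_iV^{\rm in}_{t+1}(s^{(i)}_{t+1})\mathbf 1[s^{(i)}_t=s,a^{(i)}_t=a]$ and $\tilde\sigma_{V^{\rm in}_{t+1}}(s,a)=\frac1{n_{t,s,a}}\sum_i[V^{\rm in}_{t+1}(s^{(i)}_{t+1})]^2\mathbf 1[s^{(i)}_t=s,a^{(i)}_t=a]-\tilde z_t(s,a)^2$; otherwise $\tilde\sigma_{V^{\rm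 in}_{t+1}}(s,a)=\sigma_{V^{\rm in}_{t+1}}(s,a)$. *)

From HB Require Import structures.
From mathcomp Require Import all_boot all_order all_algebra.
From mathcomp Require Import all_classical all_reals all_analysis.
Set Implicit Arguments. Unset Strict Implicit. Unset Printing Implicit Defensive.
Import Order.TTheory GRing.Theory Num.Theory.
Local Open Scope ring_scope.

(* Time steps t in [H] are represented 0-indexed by t : 'I_H.
   A trajectory is (states s_1..s_{H+1}, actions a_1..a_H):
   states indexed by 'I_H.+1, actions by 'I_H. *)
Definition traj (S A : finType) (H : nat) : finType :=
  ({ffun 'I_H.+1 -> S} * {ffun 'I_H -> A})%type.

Definition st {S A : finType} {H : nat} (tau : traj S A H) (t : 'I_H) : S :=
  tau.1 (widen_ord (leqnSn H) t).
Definition nxt {S A : finType} {H : nat} (tau : traj S A H) (t : 'I_H) : S :=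
  tau.1 (lift ord0 t).
Definition act {S A : finType} {H : nat} (tau : traj S A H) (t : 'I_H) : A :=
  tau.2 t.

Section Defs.
Variables (R : realType) (S A : finType) (H : nat).
(* initial distribution, behavior policy mu_t(a|s), transitions P_t(s'|s,a) *)
Variables (d1 : S -> R) (mu : 'I_H -> S -> A -> R) (P : 'I_H -> S -> A -> S -> R).

Definition traj_prob (tau : traj S A H) : R :=
  d1 (tau.1 ord0) *
  \prod_(t < H) (mu t (st tau t) (act tau t) * P t (st tau t) (act tau t) (nxt tau t)).

Definition occupancy (t : 'I_H) (s : S) (a : A) : R :=
  \sum_(tau : traj S A H | (st tau t == s) && (act tau t == a)) traj_prob tau.

Definition true_var (V : S -> R) (t : 'I_H) (s : S) (a : A) : R :=
  \sum_(s' : S) P t s a s' * (V s' - \sum_(s'' : S) P t s a s'' * V s'') ^+ 2.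

Variable m : nat.
Definition dataset_prob (D : {ffun 'I_m -> traj S A H}) : R :=
  \prod_(i < m) traj_prob (D i).

Definition visits (D : {ffun 'I_m -> traj S A H}) (t : 'I_H) (s : S) (a : A) : nat :=
  #|[set i : 'I_m | (st (D i) t == s) && (act (D i) t == a)]|.

Definition emp_mean (V : S -> R) (D : {ffun 'I_m -> traj S A H}) t s a : R :=
  (visits D t s a)%:R^-1 *
  \sum_(i < m | (st (D i) t == s) && (act (D i) t == a)) V (nxt (D i) t).

Definition emp_var (V : S -> R) (D : {ffun 'I_m -> traj S A H}) t s a : R :=
  (visits D t s a)%:R^-1 *
  \sum_(i < m | (st (D i) t == s) && (act (D i) t == a)) (V (nxt (D i) t)) ^+ 2
  - (emp_mean V D t s a) ^+ 2.

Definition tilde_var (V : S -> R) (D : {ffun 'I_m -> traj S A H}) t s a : R :=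
  if (2^-1 * m%:R * occupancy t s a <= (visits D t s a)%:R) && (0 < visits D t s a)%N
  then emp_var V D t s a else true_var V t s a.
End Defs.

From HB Require Import structures.
From mathcomp Require Import all_boot all_order all_algebra.
From mathcomp Require Import all_classical all_reals all_analysis.
From mathcomp Require Import ring lra.
Import Order.TTheory GRing.Theory Num.Theory.
Local Open Scope ring_scope.

(* Fix (t, s, a), write d for the occupancy d^mu_t(s,a) and n for the number of visits, and
   for f = V and f = V^2 (both in [0, B], B = H resp. H^2) let Z_f be the contribution
   1[s_t = s, a_t = a] (f(s_{t+1}) - (P_t f)(s,a)) of one episode.  By the Markov property Z_f
   has mean 0 and second moment at most d B^2/4, and |Z_f| <= B, so the Chernoff bound with
   e^w <= 1 + w + w^2 (|w| <= 1/3) gives |sum_i Z_f(episode_i)| <= B m d r outside an event of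
   probability 2 e^{-m d r^2}.  That sum is n times the error of the empirical mean of f, and
   n >= m d / 2 whenever tilde sigma is the empirical variance, so both empirical moments are
   within 2 B r of the true ones and the variance is within 6 H^2 r.  With
   r^2 = log(4HSA/delta) / (m d) a union bound over the two moments and the HSA triples
   concludes; if 6 r > 1 the bound is trivial, both variances lying in [0, H^2/4]. *)

Lemma expR_le1Dx_sqr (R : realType) (w : R) :
  `|w| <= 3^-1 -> expR w <= 1 + w + w ^+ 2.
Proof.
rewrite ler_norml => /andP[w_ge w_le].
have pos_half : 0 < 1 - w / 2 by lra.
have half_le : expR (w / 2) <= (1 - w / 2)^-1.
  have := expR_ge1Dx (- (w / 2)); rewrite expRN => le_inv.
  by rewrite -[expR (w / 2)]invrK lef_pV2 ?posrE ?invr_gt0 ?expR_gt0.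
have -> : expR w = expR (w / 2) ^+ 2 by rewrite -expRM_natl; congr expR; lra.
apply: (@le_trans _ _ (((1 - w / 2)^-1) ^+ 2)).
  by rewrite lerXn2r // ?nnegrE ?expR_ge0 // invr_ge0 ltW.
have quad_pos : 0 < 1 + w + w ^+ 2 by nra.
rewrite exprVn -[1 + w + w ^+ 2]invrK lef_pV2 ?posrE ?invr_gt0 ?exprn_gt0 //.
by rewrite -[(1 + w + w ^+ 2)^-1]mulr1 ler_pdivrMl //; nra.
Qed.

Lemma var_perturb (R : realFieldType) (B e x1 x2 y1 y2 : R) :
  0 <= x1 <= B -> 0 <= y1 <= B -> 0 <= e ->
  `|x1 - y1| <= B * e -> `|x2 - y2| <= B ^+ 2 * e ->
  `|(x2 - x1 ^+ 2) - (y2 - y1 ^+ 2)| <= 3 * B ^+ 2 * e.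
Proof.
move=> /andP[x1_ge0 x1_le] /andP[y1_ge0 y1_le] e_ge0 d1 d2.
have -> : x2 - x1 ^+ 2 - (y2 - y1 ^+ 2) = (x2 - y2) - (x1 - y1) * (x1 + y1) by ring.
apply: le_trans (ler_normB _ _) _; rewrite normrM (@ger0_norm _ (x1 + y1)) ?addr_ge0 //.
have : `|x1 - y1| * (x1 + y1) <= B * e * (2 * B).
  by apply: ler_pM; rewrite ?normr_ge0 ?addr_ge0 //; lra.
have -> : 3 * B ^+ 2 * e = B ^+ 2 * e + B * e * (2 * B) by ring.
by move=> ?; apply: lerD.
Qed.

Definition wmean {R : numFieldType} {T : finType} (p g : T -> R) : R := \sum_x p x * g x.
Definition wvar {R : numFieldType} {T : finType} (p g : T -> R) : R :=
  wmean p (fun x => g x ^+ 2) - wmean p g ^+ 2.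

Section WeightedMoments.
Context {R : realFieldType} {T : finType} {p : T -> R}.
Hypotheses (p_ge0 : forall x, 0 <= p x) (p_sum1 : \sum_x p x = 1).

Lemma wmean_cst c : wmean p (fun=> c) = c.
Proof. by rewrite /wmean -mulr_suml p_sum1 mul1r. Qed.

Lemma wmean_bound {g : T -> R} {a b : R} :
  (forall x, a <= g x <= b) -> a <= wmean p g <= b.
Proof.
move=> g_ab; rewrite -{1}(wmean_cst a) -(wmean_cst b) /wmean.
by apply/andP; split; apply: ler_sum => x _; apply: ler_wpM2l => //; case/andP: (g_ab x).
Qed.

Lemma wvarE (g : T -> R) : \sum_x p x * (g x - wmean p g) ^+ 2 = wvar p g.
Proof.
transitivity (\sum_x (p x * g x ^+ 2 +
  (- (2 * wmean p g) * (p x * g x) + wmean p g ^+ 2 * p x))).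
  by apply: eq_bigr => x _; ring.
by rewrite !big_split /= -!mulr_sumr p_sum1 /wvar /wmean; ring.
Qed.

Lemma wvar_ge0 (g : T -> R) : 0 <= wvar p g.
Proof. by rewrite -wvarE sumr_ge0 // => x _; rewrite mulr_ge0 ?sqr_ge0. Qed.

(* Popoviciu: [E g^2 <= B E g] because [g^2 <= B g]. *)
Lemma wvar_le {g : T -> R} {B : R} :
  (forall x, 0 <= g x <= B) -> wvar p g <= B ^+ 2 / 4.
Proof.
move=> g_0B; have sq_le : wmean p (fun x => g x ^+ 2) <= B * wmean p g.
  rewrite /wmean mulr_sumr; apply: ler_sum => x _.
  have /andP[g0 gB] := g_0B x.
  by rewrite [B * _]mulrCA ler_wpM2l // expr2 ler_wpM2r.
have := sqr_ge0 (wmean p g - B / 2); rewrite /wvar; nra.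
Qed.

End WeightedMoments.


Section Events.
Context {R : numDomainType} {I : finType} (p : I -> R).
Hypothesis p_ge0 : forall i, 0 <= p i.

Lemma ler_sum_union (E E1 E2 : pred I) : (forall i, E i -> E1 i || E2 i) ->
  \sum_(i | E i) p i <= \sum_(i | E1 i) p i + \sum_(i | E2 i) p i.
Proof.
move=> sub; rewrite [X in X <= _]big_mkcond [X in _ <= X + _]big_mkcond.
rewrite [X in _ <= _ + X]big_mkcond -big_split /=.
apply: ler_sum => i _; have pi_ge0 := p_ge0 i.
case Ei: (E i); last by rewrite addr_ge0 //; case: ifP.
by case/orP: (sub i Ei) => ->; case: ifP; rewrite ?addr0 ?add0r ?lerDl ?lerDr.
Qed.

Lemma ler_sum_forall (J : finType) (b : J -> pred I) :
  \sum_(i | ~~ [forall j, b j i]) p i <= \sum_j \sum_(i | ~~ b j i) p i.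
Proof.
rewrite big_mkcond; under [X in _ <= X]eq_bigr do rewrite big_mkcond.
rewrite exchange_big /=; apply: ler_sum => i _.
have sum_ge0 (Q : pred J) : 0 <= \sum_(j | Q j) (if ~~ b j i then p i else 0).
  by apply: sumr_ge0 => j _; case: ifP.
case: forallP => [_|/existsNP [j /negP bj]] /=; first exact: (sum_ge0 predT).
by rewrite (bigD1 j) //= bj lerDl.
Qed.

End Events.

Lemma card_gt0_sum1 {R : numDomainType} {T : finType} {f : T -> R} :
  \sum_x f x = 1 -> (0 < #|T|)%N.
Proof.
rewrite lt0n => f_sum1; apply/eqP => T0; move: f_sum1.
rewrite big_pred0 => [/esym/eqP|x]; first by rewrite oner_eq0.
by have := card0_eq T0 x.
Qed.


Section Reassign.
Context {R : numDomainType} {U T : finType} (get : U -> T) (set : U -> T -> U).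
Hypotheses (set_get : forall u x, set (set u x) (get u) = u)
  (get_set : forall u x, get (set u x) = x).

Lemma sum_reassign (F : U -> R) :
  #|T|%:R * \sum_u F u = \sum_u \sum_x F (set u x).
Proof.
pose swap (ux : U * T) := (set ux.1 ux.2, get ux.1).
have swapK : involutive swap by case=> u x; rewrite /swap /= set_get get_set.
rewrite pair_big /= (reindex_inj (inv_inj swapK)) /=.
rewrite (eq_bigr (fun ux : U * T => F ux.1)); last by case=> u x _; rewrite /= set_get.
rewrite -(pair_big predT predT (fun u (_ : T) => F u)) /= mulr_sumr.
by apply: eq_bigr => u _; rewrite sumr_const mulr_natl.
Qed.

(* Trajectory sums are evaluated one coordinate at a time without decomposing the type of
   trajectories: reassigning a coordinate on which [psi] does not depend costs a factor [#|T|]. *)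
Lemma sum_reassign_indep (psi : U -> R) (Q : U -> T -> R) :
  (forall u x, psi (set u x) = psi u) -> (forall u x y, Q (set u x) y = Q u y) ->
  #|T|%:R * \sum_u psi u * Q u (get u) = \sum_u psi u * \sum_x Q u x.
Proof.
move=> psi_set Q_set; rewrite sum_reassign; apply: eq_bigr => u _.
by rewrite mulr_sumr; apply: eq_bigr => x _; rewrite psi_set Q_set get_set.
Qed.

End Reassign.

Section IidChernoff.
Context {R : realType} {T : finType} {p : T -> R}.
Hypotheses (p_ge0 : forall x, 0 <= p x) (p_sum1 : \sum_x p x = 1).
Variables (Z : T -> R) (B v : R).
Hypotheses (Z_le : forall x, `|Z x| <= B) (Z_mean0 : wmean p Z = 0)
  (Z_sqr_le : wmean p (fun x => Z x ^+ 2) <= v).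

Lemma wmean_expR_le (l : R) : `|l| * B <= 3^-1 ->
  wmean p (fun x => expR (l * Z x)) <= expR (l ^+ 2 * v).
Proof.
move=> lB; apply: (@le_trans _ _ (wmean p (fun x => 1 + l * Z x + l ^+ 2 * Z x ^+ 2))).
  apply: ler_sum => x _; rewrite ler_wpM2l // -exprMn expR_le1Dx_sqr //.
  by rewrite normrM (le_trans _ lB) // ler_wpM2l.
have -> : wmean p (fun x => 1 + l * Z x + l ^+ 2 * Z x ^+ 2) =
    wmean p (fun=> 1) + l * wmean p Z + l ^+ 2 * wmean p (fun x => Z x ^+ 2).
  by rewrite /wmean !mulr_sumr -!big_split; apply: eq_bigr => x _ /=; ring.
rewrite wmean_cst // Z_mean0 mulr0 addr0; apply: le_trans (expR_ge1Dx _).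
by rewrite lerD2l ler_wpM2l ?sqr_ge0.
Qed.

Lemma iid_mgf_le (m : nat) (l : R) : `|l| * B <= 3^-1 ->
  \sum_(D : {ffun 'I_m -> T}) (\prod_i p (D i)) * expR (l * \sum_i Z (D i))
  <= expR (m%:R * (l ^+ 2 * v)).
Proof.
move=> lB; under eq_bigr do rewrite mulr_sumr expR_sum -big_split /=.
rewrite -(bigA_distr_bigA (fun _ x => p x * expR (l * Z x))) /=.
rewrite prodr_const card_ord expRM_natl lerXn2r ?nnegrE ?expR_ge0 //.
  by apply: sumr_ge0 => x _; rewrite mulr_ge0 ?expR_ge0.
exact: wmean_expR_le.
Qed.

Lemma iid_chernoff (m : nat) (l u : R) : 0 <= l -> l * B <= 3^-1 ->
  \sum_(D : {ffun 'I_m -> T} | u <= \sum_i Z (D i)) \prod_i p (D i)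
  <= expR (m%:R * (l ^+ 2 * v) - l * u).
Proof.
move=> l_ge0 lB; have P_ge0 (D : {ffun 'I_m -> T}) : 0 <= \prod_i p (D i).
  by apply: prodr_ge0 => i _.
apply: (@le_trans _ _ (\sum_(D : {ffun 'I_m -> T})
    (\prod_i p (D i)) * expR (l * \sum_i Z (D i)) * expR (- (l * u)))).
  rewrite big_mkcond; apply: ler_sum => D _; case: ifP => [uZ|_]; last first.
    by rewrite !mulr_ge0 ?expR_ge0.
  rewrite -mulrA -expRD -{1}[\prod_i _]mulr1 ler_wpM2l // -expR0 ler_expR.
  by rewrite -mulrN -mulrDr mulr_ge0 // subr_ge0.
rewrite -mulr_suml expRD ler_wpM2r ?expR_ge0 // iid_mgf_le //.
by rewrite ger0_norm.
Qed.

End IidChernoff.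

Lemma iid_abs_tail {R : realType} {T : finType} (p : T -> R) (Z : T -> R) (B v : R)
  (m : nat) (l u : R) :
  (forall x, 0 <= p x) -> \sum_x p x = 1 -> (forall x, `|Z x| <= B) ->
  wmean p Z = 0 -> wmean p (fun x => Z x ^+ 2) <= v ->
  0 <= l -> l * B <= 3^-1 ->
  \sum_(D : {ffun 'I_m -> T} | u < `|\sum_i Z (D i)|) \prod_i p (D i)
  <= 2 * expR (m%:R * (l ^+ 2 * v) - l * u).
Proof.
move=> p_ge0 p_sum1 Z_le Z_mean0 Z_sqr_le l_ge0 lB.
have P_ge0 (D : {ffun 'I_m -> T}) : 0 <= \prod_i p (D i) by apply: prodr_ge0 => i _.
apply: le_trans (ler_sum_union _ P_ge0 _ (fun D => u <= \sum_i Z (D i))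
  (fun D => u <= \sum_i - Z (D i)) _) _.
  by move=> D; rewrite sumrN -lter_normr => /ltW.
have mirror_mean0 : wmean p (fun x => - Z x) = 0.
  rewrite /wmean; under eq_bigr do rewrite mulrN.
  by rewrite sumrN -/(wmean p Z) Z_mean0 oppr0.
rewrite mulr2n mulrDl mul1r lerD //; first exact: iid_chernoff.
apply: (iid_chernoff p_ge0 p_sum1 (fun x => - Z x) B v) => // [x|].
  by rewrite normrN.
by rewrite /wmean; under eq_bigr do rewrite sqrrN.
Qed.
Section Trajectories.
Context {R : realType} {S A : finType} {H : nat}.
Variables (d1 : S -> R) (mu : 'I_H -> S -> A -> R) (P : 'I_H -> S -> A -> S -> R).
Hypotheses (d1_sum1 : \sum_s d1 s = 1) (mu_sum1 : forall t s, \sum_a mu t s a = 1)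
  (P_sum1 : forall t s a, \sum_s' P t s a s' = 1).

Local Notation traj := (traj S A H).

Definition set_state (tau : traj) (i : 'I_H.+1) (x : S) : traj :=
  ([ffun j => if j == i then x else tau.1 j], tau.2).
Definition set_act (tau : traj) (i : 'I_H) (y : A) : traj :=
  (tau.1, [ffun j => if j == i then y else tau.2 j]).

Lemma sum_set_state (i : 'I_H.+1) (psi : traj -> R) (Q : traj -> S -> R) :
  (forall tau x, psi (set_state tau i x) = psi tau) ->
  (forall tau x y, Q (set_state tau i x) y = Q tau y) ->
  #|S|%:R * \sum_tau psi tau * Q tau (tau.1 i) = \sum_tau psi tau * \sum_x Q tau x.
Proof.
move=> psi_set Q_set.
apply: (@sum_reassign_indep R traj S (fun tau => tau.1 i) (set_state^~ i) _ _ psi Q) => //.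
- move=> [f g] x; congr (_, _); apply/ffunP => j.
  by rewrite !ffunE; case: eqP => // ->.
- by move=> tau x; rewrite ffunE eqxx.
Qed.

Lemma sum_set_act (i : 'I_H) (psi : traj -> R) (Q : traj -> A -> R) :
  (forall tau y, psi (set_act tau i y) = psi tau) ->
  (forall tau x y, Q (set_act tau i x) y = Q tau y) ->
  #|A|%:R * \sum_tau psi tau * Q tau (act tau i) = \sum_tau psi tau * \sum_y Q tau y.
Proof.
move=> psi_set Q_set.
apply: (@sum_reassign_indep R traj A (act^~ i) (set_act^~ i) _ _ psi Q) => //.
- move=> [f g] y; congr (_, _); apply/ffunP => j.
  by rewrite !ffunE; case: eqP => // ->.
- by move=> tau y; rewrite /act ffunE eqxx.
Qed.

Lemma st_set_state tau (i : 'I_H.+1) x (j : 'I_H) :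
  i != j :> nat -> st (set_state tau i x) j = st tau j.
Proof. by move=> ij; rewrite /st ffunE; case: eqP => // ji; rewrite -ji eqxx in ij. Qed.

Lemma nxt_set_state tau (i : 'I_H.+1) x (j : 'I_H) :
  i != j.+1 :> nat -> nxt (set_state tau i x) j = nxt tau j.
Proof. by move=> ij; rewrite /nxt ffunE; case: eqP => // ji; rewrite -ji eqxx in ij. Qed.

Lemma act_set_act tau (i : 'I_H) y (j : 'I_H) :
  i != j -> act (set_act tau i y) j = act tau j.
Proof. by move=> ij; rewrite /act ffunE eq_sym (negbTE ij). Qed.

Definition step_prob (j : 'I_H) (tau : traj) : R :=
  mu j (st tau j) (act tau j) * P j (st tau j) (act tau j) (nxt tau j).

Definition prefix_prob (k : nat) (tau : traj) : R :=
  d1 (tau.1 ord0) * \prod_(j < H | (j < k)%N) step_prob j tau.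

Lemma prefix_prob_H tau : prefix_prob H tau = traj_prob d1 mu P tau.
Proof. by rewrite /prefix_prob /traj_prob; under eq_bigl do rewrite ltn_ord. Qed.

Lemma prefix_probS (j : 'I_H) tau :
  prefix_prob j.+1 tau = prefix_prob j tau * step_prob j tau.
Proof.
rewrite /prefix_prob -mulrA (bigD1 j) ?ltnSn //= [_ * step_prob _ _]mulrC.
congr (_ * (_ * _)); apply: eq_bigl => i.
by rewrite ltnS leq_eqVlt -val_eqE /=; case: ltngtP.
Qed.

Lemma prefix_prob_set_state k (i : 'I_H.+1) x tau :
  (k < i)%N -> prefix_prob k (set_state tau i x) = prefix_prob k tau.
Proof.
move=> ki; rewrite /prefix_prob ffunE; case: eqP => [i0|_]; first by rewrite -i0 in ki.
congr (_ * _); apply: eq_bigr => j jk.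
rewrite /step_prob st_set_state ?nxt_set_state //; rewrite neq_ltn.
- by rewrite (leq_ltn_trans jk ki) orbT.
- by rewrite (ltn_trans jk ki) orbT.
Qed.

Lemma prefix_prob_set_act k (i : 'I_H) y tau :
  (k <= i)%N -> prefix_prob k (set_act tau i y) = prefix_prob k tau.
Proof.
move=> ki; congr (_ * _); apply: eq_bigr => j jk; rewrite /step_prob act_set_act //.
by apply: contraTneq jk => <-; rewrite -leqNgt.
Qed.

Definition determined_before (k : nat) (phi : traj -> R) :=
  forall j : 'I_H, (k <= j)%N ->
    (forall tau x, phi (set_state tau (lift ord0 j) x) = phi tau) /\
    (forall tau y, phi (set_act tau j y) = phi tau).

Lemma sum_prefix_probS (k : 'I_H) (phi : traj -> R) : determined_before k phi ->
  #|S|%:R * #|A|%:R * \sum_tau prefix_prob k.+1 tau * phi tau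
  = \sum_tau prefix_prob k tau * phi tau.
Proof.
move=> /(_ k (leqnn k)) [phi_state phi_act].
have next_neq (j : 'I_H) : (j <= k)%N -> lift ord0 k != j :> nat.
  by move=> jk; rewrite lift0 neq_ltn ltnS jk orbT.
have -> : \sum_tau prefix_prob k.+1 tau * phi tau =
    \sum_tau (prefix_prob k tau * mu k (st tau k) (act tau k) * phi tau) *
      P k (st tau k) (act tau k) (tau.1 (lift ord0 k)).
  by apply: eq_bigr => tau _; rewrite prefix_probS /step_prob /nxt; ring.
rewrite (mulrC #|S|%:R) -mulrA (sum_set_state (lift ord0 k) _
  (fun tau x => P k (st tau k) (act tau k) x)); first last.
- by move=> tau x y; rewrite st_set_state ?next_neq.
- move=> tau x; rewrite prefix_prob_set_state ?phi_state ?st_set_state ?next_neq //.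
under eq_bigr do rewrite P_sum1 mulr1 mulrAC.
rewrite (sum_set_act k _ (fun tau y => mu k (st tau k) y)) //; last first.
  by move=> tau y; rewrite prefix_prob_set_act ?phi_act.
by under eq_bigr do rewrite mu_sum1 mulr1.
Qed.

Lemma sum_traj_prob_determined (k n : nat) (phi : traj -> R) :
  (k + n = H)%N -> determined_before k phi ->
  (#|S|%:R * #|A|%:R) ^+ n * \sum_tau traj_prob d1 mu P tau * phi tau
  = \sum_tau prefix_prob k tau * phi tau.
Proof.
elim: n k => [|n IH] k kn phi_det.
  rewrite expr0 mul1r addn0 in kn *; rewrite kn.
  by apply: eq_bigr => tau _; rewrite prefix_prob_H.
have kH : (k < H)%N by rewrite -kn addnS ltnS leq_addr.
rewrite exprS -mulrA (IH k.+1) ?addSnnS //; last first.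
  by move=> j kj; apply: phi_det; apply: ltnW.
exact: (sum_prefix_probS (Ordinal kH)).
Qed.

Lemma sum_traj_prob : \sum_tau traj_prob d1 mu P tau = 1.
Proof.
have S_gt0 := card_gt0_sum1 d1_sum1.
have SA_gt0 : (0 < (#|S|%:R * #|A|%:R) ^+ H :> R).
  case: (posnP H) => [->|H_gt0]; first by rewrite expr0.
  have [s0 _] := card_gt0P S_gt0.
  have A_gt0 := card_gt0_sum1 (mu_sum1 (Ordinal H_gt0) s0).
  by rewrite exprn_gt0 // mulr_gt0 // ltr0n.
have := @sum_traj_prob_determined 0 H (fun=> 1) (add0n H)
  (fun j _ => conj (fun _ _ => erefl) (fun _ _ => erefl)).
have -> : \sum_tau prefix_prob 0 tau * 1 =
    \sum_(tau : traj) 1 * (fun _ x => d1 x) tau (tau.1 ord0).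
  by apply: eq_bigr => tau _; rewrite /prefix_prob big_pred0 // !mulr1 mul1r.
move=> mass; have card_neq0 : (#|S|%:R * (#|S|%:R * #|A|%:R) ^+ H : R) != 0.
  by rewrite mulf_neq0 // ?gt_eqF // ltr0n.
apply: (mulfI card_neq0); rewrite mulr1 -mulrA.
under eq_bigr do rewrite -[traj_prob _ _ _ _]mulr1.
rewrite mass (sum_set_state ord0 (fun=> 1) (fun _ x => d1 x)) //.
under eq_bigr do rewrite d1_sum1 mulr1.
rewrite sumr_const card_prod !card_ffun !card_ord.
by rewrite natrM !natrX exprMn exprS mulrA.
Qed.

Definition visit_at (t : 'I_H) (s : S) (a : A) (tau : traj) : bool :=
  (st tau t == s) && (act tau t == a).

Lemma sum_visit_scaled (t : 'I_H) (s : S) (a : A) (g : S -> R) :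
  #|S|%:R * (#|S|%:R * #|A|%:R) ^+ (H - t.+1) *
    \sum_tau traj_prob d1 mu P tau * (if visit_at t s a tau then g (nxt tau t) else 0)
  = wmean (P t s a) g *
    \sum_tau prefix_prob t tau * (if visit_at t s a tau then mu t s a else 0).
Proof.
have visit_state tau (j : 'I_H) x : (t <= j)%N ->
    visit_at t s a (set_state tau (lift ord0 j) x) = visit_at t s a tau.
  by move=> tj; rewrite /visit_at st_set_state // lift0 neq_ltn ltnS tj orbT.
rewrite -mulrA (@sum_traj_prob_determined t.+1 (H - t.+1)); first last.
- move=> j tj; split => tau x.
    rewrite visit_state ?nxt_set_state ?(ltnW tj) //.
    by rewrite lift0 eqSS neq_ltn tj orbT.
  rewrite /visit_at act_set_act //.
  by apply: contraTneq tj => ->; rewrite ltnn.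
- by rewrite subnKC.
have -> : \sum_tau prefix_prob t.+1 tau *
      (if visit_at t s a tau then g (nxt tau t) else 0) =
    \sum_tau (prefix_prob t tau * (if visit_at t s a tau then mu t s a else 0)) *
      (fun _ x => P t s a x * g x) tau (tau.1 (lift ord0 t)).
  apply: eq_bigr => tau _; rewrite prefix_probS /step_prob /visit_at /nxt.
  by case: ifP => [/andP[/eqP-> /eqP->]|_]; [ring | rewrite !(mulr0, mul0r)].
rewrite (sum_set_state (lift ord0 t) _ (fun _ x => P t s a x * g x)) //; last first.
  by move=> tau x; rewrite prefix_prob_set_state ?visit_state // lift0.
by rewrite -mulr_suml mulrC.
Qed.

Lemma sum_traj_prob_visit (t : 'I_H) (s : S) (a : A) (g : S -> R) :
  \sum_tau traj_prob d1 mu P tau * (if visit_at t s a tau then g (nxt tau t) else 0)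
  = occupancy d1 mu P t s a * wmean (P t s a) g.
Proof.
have K_neq0 : (#|S|%:R * (#|S|%:R * #|A|%:R) ^+ (H - t.+1) : R) != 0.
  have S_gt0 : (0 < #|S|)%N by apply/card_gt0P; exists s.
  have A_gt0 : (0 < #|A|)%N by apply/card_gt0P; exists a.
  by rewrite mulf_neq0 ?expf_neq0 ?mulf_neq0 // pnatr_eq0 -lt0n.
apply: (mulfI K_neq0); rewrite sum_visit_scaled.
have -> : occupancy d1 mu P t s a = \sum_tau traj_prob d1 mu P tau *
    (if visit_at t s a tau then (fun=> 1) (nxt tau t) else 0).
  rewrite /occupancy big_mkcond /=; apply: eq_bigr => tau _; rewrite /visit_at.
  by case: ifP; rewrite ?mulr1 ?mulr0.
rewrite mulrA (sum_visit_scaled t s a (fun=> 1)) (wmean_cst (P_sum1 t s a)).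
by rewrite mul1r mulrC.
Qed.

End Trajectories.

Lemma traj_prob_ge0 {R : realType} {S A : finType} {H : nat} (d1 : S -> R)
    (mu : 'I_H -> S -> A -> R) (P : 'I_H -> S -> A -> S -> R) (tau : traj S A H) :
  (forall s, 0 <= d1 s) -> (forall t s a, 0 <= mu t s a) ->
  (forall t s a s', 0 <= P t s a s') -> 0 <= traj_prob d1 mu P tau.
Proof.
by move=> d1_ge0 mu_ge0 P_ge0; rewrite mulr_ge0 // prodr_ge0 // => j _; rewrite mulr_ge0.
Qed.

Section Empirical.
Context {R : realType} {S A : finType} {H m : nat}.
Variables (D : {ffun 'I_m -> traj S A H}) (t : 'I_H) (s : S) (a : A).

Definition visit_weight (i : 'I_m) : R :=
  if visit_at t s a (D i) then (visits D t s a)%:R^-1 else 0.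

Lemma visit_weight_ge0 i : 0 <= visit_weight i.
Proof. by rewrite /visit_weight; case: ifP; rewrite ?invr_ge0. Qed.

Lemma sum_visits : \sum_(i | visit_at t s a (D i)) 1 = (visits D t s a)%:R :> R.
Proof. by rewrite /visits -sum1_card natr_sum; apply: eq_bigl => i; rewrite inE. Qed.

Lemma visits_le : (visits D t s a <= m)%N.
Proof. by rewrite /visits (leq_trans (max_card _)) // card_ord. Qed.

Hypothesis visited : (0 < visits D t s a)%N.

Lemma visit_weight_sum1 : \sum_i visit_weight i = 1.
Proof.
rewrite /visit_weight -big_mkcond /= -[RHS](@mulVf _ (visits D t s a)%:R).
  by rewrite -sum_visits mulr_sumr mulr1.
by rewrite pnatr_eq0 -lt0n.
Qed.

Lemma emp_mean_wmean (V : S -> R) :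
  emp_mean V D t s a = wmean visit_weight (fun i => V (nxt (D i) t)).
Proof.
rewrite /emp_mean /wmean mulr_sumr big_mkcond /=; apply: eq_bigr => i _.
by rewrite /visit_weight /visit_at; case: ifP; rewrite ?mul0r.
Qed.

Lemma emp_var_wvar (V : S -> R) :
  emp_var V D t s a = wvar visit_weight (fun i => V (nxt (D i) t)).
Proof.
by rewrite /wvar -(emp_mean_wmean V) -(emp_mean_wmean (fun x => V x ^+ 2)).
Qed.

End Empirical.

Section VisitDeviation.
Context {R : realType} {S A : finType} {H m : nat}.
Variables (d1 : S -> R) (mu : 'I_H -> S -> A -> R) (P : 'I_H -> S -> A -> S -> R).
Hypotheses (d1_ge0 : forall s, 0 <= d1 s) (d1_sum1 : \sum_s d1 s = 1)
  (mu_ge0 : forall t s a, 0 <= mu t s a) (mu_sum1 : forall t s, \sum_a mu t s a = 1)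
  (P_ge0 : forall t s a s', 0 <= P t s a s')
  (P_sum1 : forall t s a, \sum_s' P t s a s' = 1).
Variables (t : 'I_H) (s : S) (a : A) (f : S -> R) (B : R).
Hypothesis f_bnd : forall x, 0 <= f x <= B.

Definition visit_dev (tau : traj S A H) : R :=
  if visit_at t s a tau then f (nxt tau t) - wmean (P t s a) f else 0.

Lemma visit_dev_norm tau : `|visit_dev tau| <= B.
Proof.
have /andP[mean_ge0 mean_le] := wmean_bound (P_ge0 t s a) (P_sum1 t s a) f_bnd.
have /andP[f_ge0 f_le] := f_bnd s.
rewrite /visit_dev; case: ifP => _; last by rewrite normr0 (le_trans f_ge0).
have /andP[fn_ge0 fn_le] := f_bnd (nxt tau t).
by rewrite ler_norml; apply/andP; split; lra.
Qed.

Lemma visit_dev_mean0 : wmean (traj_prob d1 mu P) visit_dev = 0.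
Proof.
rewrite /wmean (sum_traj_prob_visit _ _ _ mu_sum1 P_sum1 t s a
  (fun x => f x - wmean (P t s a) f)).
rewrite /wmean; under eq_bigr do rewrite mulrBr.
by rewrite sumrB -mulr_suml P_sum1 mul1r subrr mulr0.
Qed.

Lemma visit_dev_sqr_le :
  wmean (traj_prob d1 mu P) (fun tau => visit_dev tau ^+ 2)
  <= occupancy d1 mu P t s a * (B ^+ 2 / 4).
Proof.
have -> : wmean (traj_prob d1 mu P) (fun tau => visit_dev tau ^+ 2) =
  \sum_tau traj_prob d1 mu P tau * (if visit_at t s a tau
    then (fun x => (f x - wmean (P t s a) f) ^+ 2) (nxt tau t) else 0).
  by apply: eq_bigr => tau _; rewrite /visit_dev; case: ifP; rewrite ?expr0n.
rewrite (sum_traj_prob_visit _ _ _ mu_sum1 P_sum1 t s a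
  (fun x => (f x - wmean (P t s a) f) ^+ 2)) {1}/wmean (wvarE (P_sum1 t s a)).
rewrite ler_wpM2l ?wvar_le //.
by apply: sumr_ge0 => tau _; apply: traj_prob_ge0.
Qed.

Lemma sum_visit_dev (D : {ffun 'I_m -> traj S A H}) : (0 < visits D t s a)%N ->
  \sum_i visit_dev (D i) = (visits D t s a)%:R * (emp_mean f D t s a - wmean (P t s a) f).
Proof.
move=> visited; rewrite mulrBr /emp_mean mulVKf ?pnatr_eq0 -?lt0n //.
rewrite -sum_visits mulr_suml mul1r -sumrB [RHS]big_mkcond /=.
by apply: eq_bigr => i _; rewrite /visit_dev /visit_at; case: ifP.
Qed.

Lemma visit_dev_tail (r : R) : 0 < B -> 0 <= r -> 6 * r <= 1 ->
  \sum_(D : {ffun 'I_m -> traj S A H} |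
        B * (m%:R * occupancy d1 mu P t s a * r) < `|\sum_i visit_dev (D i)|)
    dataset_prob d1 mu P D
  <= 2 * expR (- (m%:R * occupancy d1 mu P t s a * r ^+ 2)).
Proof.
move=> B_gt0 r_ge0 r_small.
(* [l = 2 r / B] minimises the Chernoff exponent [m l^2 d B^2 / 4 - l B m d r]. *)
apply: le_trans (iid_abs_tail _ _ _ _ _ (2 * r / B) _ _ _ visit_dev_norm
  visit_dev_mean0 visit_dev_sqr_le _ _) _.
- by move=> tau; apply: traj_prob_ge0.
- exact: sum_traj_prob.
- by rewrite divr_ge0 ?mulr_ge0 // ltW.
- by rewrite divfK ?gt_eqF //; lra.
rewrite ler_pM2l // ler_expR le_eqVlt; apply/orP; left; apply/eqP; field.
by rewrite gt_eqF.
Qed.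

End VisitDeviation.

Lemma emp_var_dev_le {R : realType} {S A : finType} {H m : nat}
    {P : 'I_H -> S -> A -> S -> R} {V : S -> R} {B K r : R}
    {D : {ffun 'I_m -> traj S A H}} {t : 'I_H} {s : S} {a : A} :
  (forall t s a s', 0 <= P t s a s') -> (forall t s a, \sum_s' P t s a s' = 1) ->
  (forall x, 0 <= V x <= B) -> (0 < visits D t s a)%N -> 0 <= r ->
  K <= 2 * (visits D t s a)%:R ->
  `|\sum_i visit_dev P t s a V (D i)| <= B * (K * r) ->
  `|\sum_i visit_dev P t s a (fun x => V x ^+ 2) (D i)| <= B ^+ 2 * (K * r) ->
  `|emp_var V D t s a - true_var P V t s a| <= 6 * B ^+ 2 * r.
Proof.
move=> P_ge0 P_sum1 V_bnd visited r_ge0 K_le dev1 dev2.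
have n_gt0 : 0 < (visits D t s a)%:R :> R by rewrite ltr0n.
have B_ge0 : 0 <= B by have /andP[V0 VB] := V_bnd s; apply: le_trans VB.
have mean_dev (f : S -> R) (C : R) : 0 <= C ->
    `|\sum_i visit_dev P t s a f (D i)| <= C * (K * r) ->
    `|emp_mean f D t s a - wmean (P t s a) f| <= C * (2 * r).
  move=> C_ge0; rewrite sum_visit_dev // normrM (ger0_norm (ltW n_gt0)) => dev.
  rewrite -(ler_pM2l n_gt0); apply: le_trans dev _.
  by have := mulr_ge0 C_ge0 r_ge0; nra.
have V_mean_bnd := wmean_bound (P_ge0 t s a) (P_sum1 t s a) V_bnd.
have emp_mean_bnd : 0 <= emp_mean V D t s a <= B.
  rewrite emp_mean_wmean.
  by apply: (wmean_bound (visit_weight_ge0 D t s a) (visit_weight_sum1 D t s a visited)).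
rewrite -[emp_var V D t s a]/(emp_mean (fun x => V x ^+ 2) D t s a
                               - emp_mean V D t s a ^+ 2).
rewrite /true_var (wvarE (P_sum1 t s a)) /wvar.
have -> : 6 * B ^+ 2 * r = 3 * B ^+ 2 * (2 * r) by ring.
apply: var_perturb => //; first by rewrite mulr_ge0.
  exact: mean_dev.
by apply: mean_dev; rewrite ?sqr_ge0.
Qed.

Section VarianceEstimate.
Context {R : realType} {S A : finType} {H m : nat}.
Variables (d1 : S -> R) (mu : 'I_H -> S -> A -> R) (P : 'I_H -> S -> A -> S -> R)
  (Vin : 'I_H -> S -> R) (delta : R).
Hypotheses (d1_ge0 : forall s, 0 <= d1 s) (d1_sum1 : \sum_s d1 s = 1)
  (mu_ge0 : forall t s a, 0 <= mu t s a) (mu_sum1 : forall t s, \sum_a mu t s a = 1)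
  (P_ge0 : forall t s a s', 0 <= P t s a s')
  (P_sum1 : forall t s a, \sum_s' P t s a s' = 1)
  (Vin_bnd : forall t s, 0 <= Vin t s <= H%:R) (delta_01 : 0 < delta < 1).

Local Notation occ := (occupancy d1 mu P).

Lemma dataset_prob_ge0 (D : {ffun 'I_m -> traj S A H}) : 0 <= dataset_prob d1 mu P D.
Proof. by apply: prodr_ge0 => i _; apply: traj_prob_ge0. Qed.

Lemma sum_dataset_prob :
  \sum_(D : {ffun 'I_m -> traj S A H}) dataset_prob d1 mu P D = 1.
Proof.
rewrite -(bigA_distr_bigA (fun _ tau => traj_prob d1 mu P tau)) /=.
by rewrite sum_traj_prob // prodr_const expr1n.
Qed.

Definition conf_ratio : R := 4 * H%:R * #|S|%:R * #|A|%:R / delta.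

Definition conc_radius (t : 'I_H) (s : S) (a : A) : R :=
  Num.sqrt (ln conf_ratio / (m%:R * occ t s a)).

Definition var_accurate (t : 'I_H) (s : S) (a : A) (D : {ffun 'I_m -> traj S A H}) :=
  (0 < occ t s a) ==>
  (`|tilde_var d1 mu P (Vin t) D t s a - true_var P (Vin t) t s a|
   <= 6 * H%:R ^+ 2 * conc_radius t s a
      + 4 * H%:R ^+ 2 * ln conf_ratio / (m%:R * occ t s a)).

Lemma conf_ratio_ge4 (t : 'I_H) (s : S) (a : A) : 4 <= conf_ratio.
Proof.
have [delta_gt0 delta_lt1] := andP delta_01.
have H_ge1 : 1 <= H%:R :> R by rewrite ler1n (leq_ltn_trans (leq0n t)).
have S_ge1 : 1 <= #|S|%:R :> R by rewrite ler1n; apply/card_gt0P; exists s.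
have A_ge1 : 1 <= #|A|%:R :> R by rewrite ler1n; apply/card_gt0P; exists a.
have HSA_ge1 : 1 <= H%:R * #|S|%:R * #|A|%:R :> R.
  have : 1 <= H%:R * #|S|%:R :> R by nra.
  nra.
by rewrite /conf_ratio ler_pdivlMr //; nra.
Qed.

Lemma ln_conf_ratio_ge0 (t : 'I_H) (s : S) (a : A) : 0 <= ln conf_ratio.
Proof. by rewrite ln_ge0 // (le_trans _ (conf_ratio_ge4 t s a)) // ler1n. Qed.

Lemma inaccurate_cases (t : 'I_H) (s : S) (a : A) (D : {ffun 'I_m -> traj S A H}) :
  ~~ var_accurate t s a D ->
  [/\ 0 < occ t s a, m%:R * occ t s a <= 2 * (visits D t s a)%:R,
      (0 < visits D t s a)%N &
      6 * H%:R ^+ 2 * conc_radius t s a < `|emp_var (Vin t) D t s a - true_var P (Vin t) t s a|].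
Proof.
rewrite /var_accurate negb_imply => /andP[occ_gt0]; rewrite -ltNge.
have slack_ge0 : 0 <= 4 * H%:R ^+ 2 * ln conf_ratio / (m%:R * occ t s a).
  by rewrite divr_ge0 ?mulr_ge0 ?ler0n ?sqr_ge0 ?(ln_conf_ratio_ge0 t s a) ?(ltW occ_gt0).
rewrite /tilde_var; case: ifP => [/andP[n_ge n_gt0]|_]; last first.
  have main_ge0 : 0 <= 6 * H%:R ^+ 2 * conc_radius t s a.
    by rewrite !mulr_ge0 ?sqr_ge0 ?sqrtr_ge0.
  by rewrite subrr normr0 ltNge addr_ge0.
move=> dev; split => //; first lra.
by apply: le_lt_trans dev; rewrite lerDl.
Qed.

Lemma emp_var_true_var_le (t : 'I_H) (s : S) (a : A) (D : {ffun 'I_m -> traj S A H}) :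
  (0 < visits D t s a)%N ->
  `|emp_var (Vin t) D t s a - true_var P (Vin t) t s a| <= H%:R ^+ 2 / 4.
Proof.
move=> visited.
have emp_ge0 := wvar_ge0 (visit_weight_ge0 D t s a) (visit_weight_sum1 D t s a visited)
  (fun i => Vin t (nxt (D i) t)).
have emp_le := wvar_le (visit_weight_ge0 D t s a) (fun i => Vin_bnd t (nxt (D i) t)).
have true_ge0 := wvar_ge0 (P_ge0 t s a) (P_sum1 t s a) (Vin t).
have true_le := wvar_le (P_ge0 t s a) (Vin_bnd t).
rewrite emp_var_wvar // /true_var (wvarE (P_sum1 t s a)) ler_norml.
by apply/andP; split; lra.
Qed.

Lemma var_inaccurate_prob (t : 'I_H) (s : S) (a : A) :
  \sum_(D | ~~ var_accurate t s a D) dataset_prob d1 mu P D <= 4 / conf_ratio.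
Proof.
have conf_gt0 : 0 < conf_ratio by apply: (lt_le_trans _ (conf_ratio_ge4 t s a)).
set r := conc_radius t s a.
have r_ge0 : 0 <= r by apply: sqrtr_ge0.
have H_gt0 : 0 < H%:R :> R by rewrite ltr0n (leq_ltn_trans (leq0n t)).
case: (boolP [&& 6 * r <= 1, 0 < occ t s a & (0 < m)%N]); last first.
  move=> degenerate; rewrite big_pred0; first by rewrite divr_ge0 // ltW.
  move=> D.
  apply/negbTE; rewrite negbK; apply/negPn/negP => /inaccurate_cases [occ_gt0 _ visited dev].
  move/negP: degenerate; apply; rewrite occ_gt0 (leq_trans visited (visits_le D t s a)) !andbT.
  rewrite leNgt; apply/negP => r_big.
  have := emp_var_true_var_le _ _ _ _ visited; rewrite leNgt => /negP; apply.
  by apply: le_lt_trans dev; rewrite -/r; nra.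
case/and3P=> r_small occ_gt0 m_gt0.
have tail_inv : expR (- (m%:R * occ t s a * r ^+ 2)) = conf_ratio^-1.
  have md_gt0 : 0 < m%:R * occ t s a by rewrite mulr_gt0 ?ltr0n.
  rewrite /r /conc_radius sqr_sqrtr ?divr_ge0 ?(ln_conf_ratio_ge0 t s a) ?ltW //.
  by rewrite mulrC divfK ?gt_eqF // expRN lnK.
have Vin2_bnd x : 0 <= Vin t x ^+ 2 <= H%:R ^+ 2.
  by have /andP[V0 VH] := Vin_bnd t x; rewrite sqr_ge0 lerXn2r ?nnegrE ?(le_trans V0).
have tail := visit_dev_tail _ _ _ d1_ge0 d1_sum1 mu_ge0 mu_sum1 P_ge0 P_sum1 t s a.
apply: (le_trans (ler_sum_union _ dataset_prob_ge0 _
  (fun D => H%:R * (m%:R * occ t s a * r) < `|\sum_i visit_dev P t s a (Vin t) (D i)|)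
  (fun D => H%:R ^+ 2 * (m%:R * occ t s a * r) <
            `|\sum_i visit_dev P t s a (fun x => Vin t x ^+ 2) (D i)|) _)); last first.
  apply: le_trans (lerD (tail m _ _ (Vin_bnd t) r H_gt0 r_ge0 r_small)
    (tail m _ _ Vin2_bnd r (exprn_gt0 2 H_gt0) r_ge0 r_small)) _.
  by rewrite tail_inv; lra.
move=> D /inaccurate_cases [_ n_le visited]; rewrite ltNge; apply: contraR.
rewrite negb_or -!leNgt => /andP[dev dev2].
exact: (emp_var_dev_le P_ge0 P_sum1 (Vin_bnd t) visited r_ge0 n_le dev dev2).
Qed.

Lemma sum_fail_level : \sum_(t : 'I_H) \sum_(s : S) \sum_(a : A) 4 / conf_ratio <= delta.
Proof.
have [delta_gt0 _] := andP delta_01.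
rewrite !sumr_const card_ord -[_ *+ #|A|]mulr_natl -[_ *+ #|S|]mulr_natl.
rewrite -[_ *+ H]mulr_natl !mulrA.
have [->|] := eqVneq (H%:R * #|S|%:R * #|A|%:R : R) 0; first by rewrite !mul0r ltW.
rewrite !mulf_eq0 !negb_or => /andP[/andP[H_neq0 S_neq0] A_neq0].
rewrite le_eqVlt; apply/orP; left; apply/eqP; rewrite /conf_ratio; field.
by rewrite H_neq0 S_neq0 A_neq0 gt_eqF.
Qed.

Lemma var_accurate_prob :
  1 - delta <= \sum_(D | [forall t, forall s, forall a, var_accurate t s a D])
                 dataset_prob d1 mu P D.
Proof.
rewrite -sum_dataset_prob.
rewrite (bigID (fun D => [forall t, forall s, forall a, var_accurate t s a D])) /=.
rewrite -addrA gerDl subr_le0; apply: le_trans sum_fail_level.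
apply: le_trans (ler_sum_forall _ dataset_prob_ge0 _
  (fun t D => [forall s, forall a, var_accurate t s a D])) _.
apply: ler_sum => t _; apply: le_trans (ler_sum_forall _ dataset_prob_ge0 _
  (fun s D => [forall a, var_accurate t s a D])) _.
apply: ler_sum => s _; apply: le_trans (ler_sum_forall _ dataset_prob_ge0 _
  (fun a D => var_accurate t s a D)) _.
by apply: ler_sum => a _; apply: var_inaccurate_prob.
Qed.

End VarianceEstimate.

Theorem lemmaB3 (R : realType) (S A : finType) (H m : nat)
  (d1 : S -> R) (mu : 'I_H -> S -> A -> R) (P : 'I_H -> S -> A -> S -> R)
  (Vin : 'I_H -> S -> R) (delta : R)
  (hd1_ge0 : forall s, 0 <= d1 s) (hd1_sum : \sum_(s : S) d1 s = 1)
  (hmu_ge0 : forall t s a, 0 <= mu t s a) (hmu_sum : forall t s, \sum_(a : A) mu t s a = 1)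
  (hP_ge0 : forall t s a s', 0 <= P t s a s')
  (hP_sum : forall t s a, \sum_(s' : S) P t s a s' = 1)
  (hV : forall t s, 0 <= Vin t s <= H%:R)
  (hdelta : 0 < delta < 1) :
  \sum_(D : {ffun 'I_m -> traj S A H} |
        [forall t : 'I_H, forall s : S, forall a : A,
          (0 < occupancy d1 mu P t s a) ==>
          (`| tilde_var d1 mu P (Vin t) D t s a - true_var P (Vin t) t s a |
           <= 6 * H%:R ^+ 2 *
                Num.sqrt (ln (4 * H%:R * #|S|%:R * #|A|%:R / delta)
                          / (m%:R * occupancy d1 mu P t s a))
              + 4 * H%:R ^+ 2 * ln (4 * H%:R * #|S|%:R * #|A|%:R / delta)
                / (m%:R * occupancy d1 mu P t s a))])
     dataset_prob d1 mu P D
  >= 1 - delta.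
Proof.
exact: (var_accurate_prob (m := m) d1 mu P Vin delta hd1_ge0 hd1_sum hmu_ge0 hmu_sum
  hP_ge0 hP_sum hV hdelta).
Qed.
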